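(* Let $T_k=M_1M_2\cdots M_k$. Then $\delta(T_k)$ converges to $0$ almost surely as $k\to\infty$.
   Context: Let $\mathcal{G}=(\mathcal{V},\mathcal{E})$ be a strongly connected directed graph with $\mathcal{V}=\{1,\dots,m\}$, with a self-loop $(i,i)\in\mathcal{E}$ at every node. Let $\mathcal{O}_i=\{j:(i,j)\in\mathcal{E}\}$ and $D_i=|\mathcal{O}_i|$. At each time step $k\ge1$ each link $(i,j)\in\mathcal{E}$ is reliable with probability $q_{ij}\in(0,1]$, independently across links and across time steps; let $X_k[i,j]=1$ if $(i,j)$ is reliable at step $k$ and $0$ otherwise. Let $n=m+|\mathcal{E}|$ and index rows/columns of $n\times n$ matrices by $\mathcal{V}\cup\mathcal{E}$. The random matrix $M_k$ is defined by: for $i\in\mathcal{V}$ and $(i,j)\in\mathcal{E}$, $M_k[i,j]=X_k[i,j]/D_i$ and $M_k[i,(i,j)]=(1-X_k[i,j])/D_i$, all other entries of row $i$ being $0$; for $(i,j)\in\mathcal{E}$, $M_k[(i,j),j]=X_k[i,j]$ and $M_k[(i,j),(i,j)]=1-X_k[i,j]$, all other entries of row $(i,j)$ being $0$. For a row stochastic matrix $A$, $\delta(A)=\max_j\max_{i_1,i_2}|A[i_1,j]-A[i_2,j]|$. *)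

From HB Require Import structures.
From mathcomp Require Import all_boot all_order all_algebra.
From mathcomp Require Import all_classical all_reals all_analysis.
Set Implicit Arguments. Unset Strict Implicit. Unset Printing Implicit Defensive.
Import Order.TTheory GRing.Theory Num.Theory.
Import numFieldNormedType.Exports.
Local Open Scope classical_set_scope.
Local Open Scope ring_scope.

Definition strongly_connected m (E : rel 'I_m) : Prop :=
  forall i j : 'I_m, connect E i j.

Definition self_loops m (E : rel 'I_m) : Prop := forall i : 'I_m, E i i.

Notation edge m E := ({p : 'I_m * 'I_m | E p.1 p.2}).
(* Index set V \cup E of the n x n matrices, n = m + |E|. *)
Notation idx m E := ('I_m + edge m E)%type.

(* out-degree D_i = |O_i| (the self-loop counts) *)
Definition outdeg m (E : rel 'I_m) (i : 'I_m) : nat := #|[pred j | E i j]|.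

Definition mutually_independent d (T : measurableType d) (R : realType)
  (P : probability T R) (I : eqType) (A : I -> set T) : Prop :=
  forall s : seq I, uniq s ->
    P (\bigcap_(i in [set x | x \in s]) A i) = (\prod_(i <- s) P (A i))%E.

Section Model.
Variables (R : realType) (d : measure_display) (T : measurableType d).
Variables (m : nat) (E : rel 'I_m).
(* Rel t e = event "link e is reliable at time step t+1" *)
Variable Rel : nat -> edge m E -> set T.

(* X_{t+1}[i,j] as a real number (0 if (i,j) is not a link) *)
Definition Xlink (t : nat) (i j : 'I_m) (w : T) : R :=
  match @insub _ (fun p : 'I_m * 'I_m => E p.1 p.2) _ (i, j) with
  | Some e => \1_(Rel t e) w
  | None => 0
  end.

Definition Mstep (t : nat) (w : T) (a b : idx m E) : R :=
  match a, b with
  | inl i, inl j => if E i j then Xlink t i j w / (outdeg E i)%:R else 0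
  | inl i, inr e => if (val e).1 == i then (1 - \1_(Rel t e) w) / (outdeg E i)%:R
                    else 0
  | inr e, inl j => if (val e).2 == j then \1_(Rel t e) w else 0
  | inr e, inr e' => if e == e' then 1 - \1_(Rel t e) w else 0
  end.

Definition mat_id (a b : idx m E) : R := (a == b)%:R.
Definition mat_mul (A B : idx m E -> idx m E -> R) (a b : idx m E) : R :=
  \sum_(c : idx m E) A a c * B c b.

Fixpoint Tprod (k : nat) (w : T) : idx m E -> idx m E -> R :=
  match k with
  | 0 => mat_id
  | k'.+1 => mat_mul (Tprod k' w) (Mstep k' w)
  end.
End Model.

Definition delta (R : realType) (I : finType) (A : I -> I -> R) : R :=
  \big[Num.max/0]_(j : I) \big[Num.max/0]_(i1 : I) \big[Num.max/0]_(i2 : I)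
     `|A i1 j - A i2 j|.

(* Cut time into blocks of L = m consecutive steps and call a block reliable
   when every link is reliable at every step of it.  On a reliable block the
   product of the M's is a stochastic matrix whose column at a fixed node j0
   is at least m^-L everywhere, because j0 is reachable in fewer than m steps
   from every node and from every link (a link (i,j) first delivers to j).
   Such a matrix contracts delta by the factor 1 - m^-L, and every stochastic
   matrix is nonexpanding for delta, so delta(T_k) decays geometrically in the
   number of reliable blocks before k.  Reliable blocks are independent events
   of the same positive probability, so almost surely there are infinitely
   many of them. *)
From HB Require Import structures.
From mathcomp Require Import all_boot all_order all_algebra.
From mathcomp Require Import all_classical all_reals all_analysis.
From mathcomp Require Import ring lra.
Set Implicit Arguments. Unset Strict Implicit. Unset Printing Implicit Defensive.
Import Order.TTheory GRing.Theory Num.Theory.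
Import numFieldNormedType.Exports.
Local Open Scope classical_set_scope.
Local Open Scope ring_scope.

Section StochasticMatrices.
Variables (R : realType) (I : finType).

Lemma sum_if_eq (a : I) (x : R) : \sum_(j : I) (if a == j then x else 0) = x.
Proof.
rewrite (bigD1 a) //= eqxx big1 ?addr0 // => j /negbTE.
by rewrite eq_sym => ->.
Qed.

Implicit Types A B C X : I -> I -> R.

Definition mmul A B (a b : I) : R := \sum_(c : I) A a c * B c b.
Definition mone (a b : I) : R := (a == b)%:R.
Definition stochastic A := (forall a b, 0 <= A a b) /\ (forall a, \sum_b A a b = 1).

Lemma mmulA A B C : mmul A (mmul B C) = mmul (mmul A B) C.
Proof.
apply/funext => a; apply/funext => b; rewrite /mmul.
under eq_bigr => c _ do rewrite big_distrr /=.
rewrite exchange_big /=; apply: eq_bigr => c _.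
by rewrite big_distrl /=; apply: eq_bigr => c' _; rewrite mulrA.
Qed.

Lemma mmulm1 A : mmul A mone = A.
Proof.
apply/funext => a; apply/funext => b; rewrite /mmul /mone (bigD1 b) //= eqxx mulr1.
by rewrite big1 ?addr0 // => c /negbTE ->; rewrite mulr0.
Qed.

Lemma mmul1m A : mmul mone A = A.
Proof.
apply/funext => a; apply/funext => b; rewrite /mmul /mone (bigD1 a) //= eqxx mul1r.
by rewrite big1 ?addr0 // => c; rewrite eq_sym => /negbTE ->; rewrite mul0r.
Qed.

Lemma stochastic_mone : stochastic mone.
Proof.
split=> [a b|a]; first by rewrite /mone ler0n.
rewrite (bigD1 a) //= /mone eqxx big1 ?addr0 // => b.
by rewrite eq_sym => /negbTE ->.
Qed.

Lemma stochastic_mmul A B : stochastic A -> stochastic B -> stochastic (mmul A B).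
Proof.
move=> [A0 A1] [B0 B1]; split=> [a b|a].
  by apply: sumr_ge0 => c _; rewrite mulr_ge0.
rewrite /mmul exchange_big /= -(A1 a); apply: eq_bigr => c _.
by rewrite -big_distrr /= B1 mulr1.
Qed.

Lemma stochastic_le1 A a b : stochastic A -> A a b <= 1.
Proof.
move=> [A0 A1]; rewrite -(A1 a) (bigD1 b) //= lerDl.
by apply: sumr_ge0 => c _.
Qed.

Lemma mmul_ge_term A B a b c : (forall x y, 0 <= A x y) -> (forall x y, 0 <= B x y) ->
  A a c * B c b <= mmul A B a b.
Proof.
move=> A0 B0; rewrite /mmul (bigD1 c) //= lerDl.
by apply: sumr_ge0 => k _; rewrite mulr_ge0.
Qed.

Lemma delta_ge0 A : 0 <= delta A.
Proof. exact: bigmax_ge_id. Qed.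

Lemma delta_le A x : 0 <= x -> (forall i1 i2 j, `|A i1 j - A i2 j| <= x) ->
  delta A <= x.
Proof.
move=> x0 Ax; apply: bigmax_le => // j _.
by apply: bigmax_le => // i1 _; apply: bigmax_le.
Qed.

Lemma le_delta A i1 i2 j : `|A i1 j - A i2 j| <= delta A.
Proof.
apply: le_trans (le_bigmax _ _ j); apply: le_trans (le_bigmax _ _ i1).
exact: (le_bigmax _ _ i2).
Qed.

Lemma stochastic_delta_le1 A : stochastic A -> delta A <= 1.
Proof.
move=> sA; apply: delta_le => // i1 i2 j.
have := stochastic_le1 i1 j sA; have := stochastic_le1 i2 j sA.
case: sA => A0 _; have := A0 i1 j; have := A0 i2 j.
by move=> *; rewrite ler_norml; apply/andP; split; lra.
Qed.

Lemma sum_weighted_bounds (w x : I -> R) lo hi s :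
  (forall k, 0 <= w k) -> \sum_k w k = s -> (forall k, lo <= x k <= hi) ->
  s * lo <= \sum_k w k * x k <= s * hi.
Proof.
move=> w0 <- xb; rewrite !big_distrl /=; apply/andP; split;
  by apply: ler_sum => k _; rewrite ler_wpM2l //; case/andP: (xb k).
Qed.

(* Splitting off the mass c that every row puts on column c0 leaves rows of
   total weight 1 - c, whose averages of a column of X differ by at most
   (1 - c) times the spread of that column. *)
Lemma delta_mmul_contract A X c c0 : stochastic A -> 0 <= c ->
  (forall a, c <= A a c0) -> delta (mmul A X) <= (1 - c) * delta X.
Proof.
move=> sA c_ge0 Ac; have [A0 A1] := sA.
have c_le1 : c <= 1 by apply: le_trans (Ac c0) (stochastic_le1 _ _ sA).
apply: delta_le => [|i1 i2 j]; first by rewrite mulr_ge0 ?delta_ge0 ?subr_ge0.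
pose x k := X k j.
have [kmin _ Hmin] := @arg_minP _ _ I c0 predT x isT.
have [kmax _ Hmax] := @arg_maxP _ _ I c0 predT x isT.
have xb k : x kmin <= x k <= x kmax by rewrite Hmin //=; apply: Hmax.
have spread : x kmax - x kmin <= delta X.
  exact: le_trans (ler_norm _) (le_delta X kmax kmin j).
pose w a k := A a k - (k == c0)%:R * c.
have w0 a k : 0 <= w a k.
  by rewrite /w; case: eqP => [->|_]; rewrite ?mul1r ?mul0r ?subr0 ?subr_ge0.
have w1 a : \sum_k w a k = 1 - c.
  rewrite /w sumrB A1 (bigD1 c0) //= eqxx mul1r big1 ?addr0 //.
  by move=> k /negbTE ->; rewrite mul0r.
have mass_c0 : \sum_k (k == c0)%:R * c * x k = c * x c0.
  rewrite (bigD1 c0) //= eqxx mul1r big1 ?addr0 // => k /negbTE ->.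
  by rewrite !mul0r.
have split_row a : mmul A X a j = c * x c0 + \sum_k w a k * x k.
  rewrite /w; under [in RHS]eq_bigr => k _ do rewrite mulrBl.
  by rewrite sumrB mass_c0 addrC subrK.
rewrite !split_row.
have /andP[lo1 hi1] := sum_weighted_bounds (w0 i1) (w1 i1) xb.
have /andP[lo2 hi2] := sum_weighted_bounds (w0 i2) (w1 i2) xb.
have : (1 - c) * (x kmax - x kmin) <= (1 - c) * delta X by rewrite ler_wpM2l ?subr_ge0.
by move=> ?; rewrite ler_norml; apply/andP; split; nra.
Qed.

Lemma delta_mmul_le A X : stochastic A -> delta (mmul A X) <= delta X.
Proof.
move=> sA; have [c0 _|I0] := pickP (@predT I); last first.
  by apply: delta_le => [|i1]; rewrite ?delta_ge0 //; have := I0 i1.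
rewrite -[leRHS]mul1r -[1 in leRHS]subr0.
by apply: (delta_mmul_contract _ (c0 := c0)) => // a; case: sA.
Qed.

End StochasticMatrices.

Section Consensus.
Variables (R : realType) (d : measure_display) (T : measurableType d).
Variables (m : nat) (E : rel 'I_m).
Variable Rel : nat -> edge m E -> set T.
Hypothesis loops : self_loops E.
Local Notation M := (@Mstep R d T m E Rel).
Local Notation link := (edge m E).
Local Notation index := (idx m E).

Lemma outdeg_gt0 i : (0 < outdeg E i)%N.
Proof. by apply/card_gt0P; exists i; rewrite inE loops. Qed.

Lemma sum_links_from (g : link -> R) (i : 'I_m) :
  \sum_(j : 'I_m) (match @insub _ (fun p : 'I_m * 'I_m => E p.1 p.2) link (i, j) with
                   | Some e => g e | None => 0 end)
  = \sum_(e : link) (if (val e).1 == i then g e else 0).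
Proof.
have -> : \sum_(e : link) (if (val e).1 == i then g e else 0) =
    \sum_(e : link) \sum_(j : 'I_m) (if val e == (i, j) then g e else 0).
  apply: eq_bigr => e _; case: eqP => [ei|ei]; last first.
    by rewrite big1 // => j _; case: eqP => // ev; case: ei; rewrite ev.
  rewrite (bigD1 (val e).2) //= -ei -surjective_pairing eqxx big1 ?addr0 //.
  by move=> j jn; case: eqP => // ev; move: jn; rewrite ev /= eqxx.
rewrite exchange_big /=; apply: eq_bigr => j _.
case: insubP => [e0 _ ve0|nE].
  rewrite (bigD1 e0) //= ve0 eqxx big1 ?addr0 // => e ne.
  by case: eqP => // ev; case/eqP: ne; exact: val_inj (etrans ev (esym ve0)).
by rewrite big1 // => e _; case: eqP => // ev; move: nE; rewrite -ev (valP e).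
Qed.

Lemma outdeg_sum_links i :
  (outdeg E i)%:R = \sum_(e : link) (if (val e).1 == i then 1 else 0) :> R.
Proof.
rewrite -sum_links_from /outdeg -sum1_card natr_sum big_mkcond /=.
apply: eq_bigr => j _; rewrite inE.
by case: insubP => [e /= -> _|/negbTE ->].
Qed.

Lemma stochastic_Mstep t w : stochastic (M t w).
Proof.
have indic_ge0 (A : set T) : 0 <= (\1_A w : R) by rewrite indicE ler0n.
have indic_le1 (A : set T) : (\1_A w : R) <= 1.
  by rewrite indicE; case: (w \in A); rewrite ?ler01.
split.
  move=> [i|e] [j|e'] /=; case: ifP => // _; rewrite ?divr_ge0 ?subr_ge0 //.
  by rewrite /Xlink; case: insubP.
move=> [i|e]; rewrite big_sumType /=; last first.
  by rewrite !sum_if_eq subrKC.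
have -> : \sum_(j : 'I_m) (if E i j then @Xlink R d T m E Rel t i j w / (outdeg E i)%:R else 0)
   = \sum_(e : link) (if (val e).1 == i then \1_(Rel t e) w / (outdeg E i)%:R else 0).
  rewrite -sum_links_from; apply: eq_bigr => j _; rewrite /Xlink.
  by case: insubP => [e /= -> _|/negbTE ->].
rewrite -big_split /= -[RHS](divff (_ : (outdeg E i)%:R != 0 :> R)); last first.
  by rewrite pnatr_eq0 -lt0n outdeg_gt0.
rewrite outdeg_sum_links big_distrl /=; apply: eq_bigr => e _.
by case: ifP => _; rewrite ?addr0 ?mul0r // -mulrDl subrKC.
Qed.

(* [Mprod s n w] is M_(s+1) ... M_(s+n), with [Mstep t] standing for M_(t+1). *)
Fixpoint Mprod (s n : nat) (w : T) : index -> index -> R :=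
  match n with
  | 0 => @mone R index
  | n'.+1 => mmul (Mprod s n' w) (M (s + n') w)
  end.

Lemma Tprod_Mprod k w : @Tprod R d T m E Rel k w = Mprod 0 k w.
Proof. by elim: k => //= k ->. Qed.

Lemma Mprod_add s a n w : Mprod s (a + n) w = mmul (Mprod s a w) (Mprod (s + a) n w).
Proof.
elim: n => [|n IH]; first by rewrite addn0 /= mmulm1.
by rewrite addnS /= IH mmulA addnA.
Qed.

Lemma Mprod_S s n w : Mprod s n.+1 w = mmul (M s w) (Mprod s.+1 n w).
Proof. by rewrite -add1n Mprod_add /= mmul1m addn0 addn1. Qed.

Lemma stochastic_Mprod s n w : stochastic (Mprod s n w).
Proof.
elim: n => [|n IH] /=; first exact: stochastic_mone.
exact: stochastic_mmul IH (stochastic_Mstep _ _).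
Qed.

Definition all_reliable (w : T) (s n : nat) :=
  forall t, (s <= t < s + n)%N -> forall e, Rel t e w.

Lemma all_reliable_S w s n : all_reliable w s n.+1 ->
  (forall e, Rel s e w) /\ all_reliable w s.+1 n.
Proof.
move=> rel; split=> [|t /andP[st tn]]; apply: rel.
  by rewrite leqnn addnS ltnS leq_addr.
by rewrite ltnW //= addnS -addSn.
Qed.

Lemma Mstep_link t w i j : (forall e, Rel t e w) -> E i j ->
  M t w (inl i) (inl j) = (outdeg E i)%:R^-1.
Proof.
move=> rel Eij /=; rewrite Eij /Xlink.
case: insubP => [e _ _|]; last by rewrite Eij.
by rewrite indicE mem_set ?mul1r.
Qed.

Lemma Mstep_edge t w e : (forall e, Rel t e w) -> M t w (inr e) (inl (val e).2) = 1.
Proof. by move=> rel /=; rewrite eqxx indicE mem_set. Qed.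

Lemma inv_m_le_inv_outdeg i : (m%:R : R)^-1 <= (outdeg E i)%:R^-1.
Proof.
have D_le_m : (outdeg E i <= m)%N by rewrite -[m in (_ <= m)%N]card_ord max_card.
by rewrite lef_pV2 ?posrE ?ltr0n ?ler_nat ?outdeg_gt0 // (leq_trans (outdeg_gt0 i)).
Qed.

(* Walk along [p], and stay put on the self-loop of its end once it is used up. *)
Lemma Mprod_path_ge n s i p w : path E i p -> (size p <= n)%N ->
  all_reliable w s n -> (m%:R^-1)^+n <= Mprod s n w (inl i) (inl (last i p)).
Proof.
elim: n s i p => [|n IH] s i p.
  by case: p => //= _ _ _; rewrite /mone eqxx expr0.
move=> pp sp /all_reliable_S[rel_s rel].
have [M0 _] := stochastic_Mstep s w; have [P0 _] := stochastic_Mprod s.+1 n w.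
have inv_ge0 : 0 <= (m%:R : R)^-1 by rewrite invr_ge0.
rewrite Mprod_S exprS.
case: p pp sp => [|i1 p] /= => [_ _|/andP[Ei1 pp] sp].
  apply: le_trans (mmul_ge_term _ _ (inl i) M0 P0).
  rewrite Mstep_link ?loops // ler_pM ?exprn_ge0 ?inv_m_le_inv_outdeg //.
  exact: (IH _ _ [::]).
apply: le_trans (mmul_ge_term _ _ (inl i1) M0 P0).
by rewrite Mstep_link // ler_pM ?exprn_ge0 ?inv_m_le_inv_outdeg ?IH.
Qed.

Local Notation L := m.-1.+1.

Section Connected.
Hypothesis connected : strongly_connected E.

Lemma short_path i j :
  exists2 p, path E i p & last i p = j /\ (size p <= m.-1)%N.
Proof.
have /connectP[p0 pp0 ->] := connected i j.
have [p pp up _] := shortenP pp0; exists p => //; split=> //.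
have := max_card (mem (i :: p)); rewrite card_ord (card_uniqP up) /= => pm.
by rewrite -ltnS (leq_trans pm) ?leqSpred.
Qed.

Lemma Mprod_col_ge j n s w : (m.-1 <= n)%N -> all_reliable w s n.+1 ->
  forall a, (m%:R^-1)^+n.+1 <= Mprod s n.+1 w a (inl j).
Proof.
move=> mn rel [i|e].
  have [p pp [<- sp]] := short_path i j.
  by apply: Mprod_path_ge => //; rewrite (leq_trans sp) // (leq_trans mn).
have [p pp [pj sp]] := short_path (val e).2 j.
have [rel_s rel'] := all_reliable_S rel.
have [M0 _] := stochastic_Mstep s w; have [P0 _] := stochastic_Mprod s.+1 n w.
have inv_ge0 : 0 <= (m%:R : R)^-1 by rewrite invr_ge0.
have m_gt0 : (0 < m)%N := leq_ltn_trans (leq0n j) (ltn_ord j).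
have inv_le1 : (m%:R : R)^-1 <= 1 by rewrite invf_le1 ?ler1n ?ltr0n.
rewrite Mprod_S; apply: le_trans (mmul_ge_term _ _ (inl (val e).2) M0 P0).
rewrite Mstep_edge // mul1r exprS -pj.
apply: le_trans (Mprod_path_ge pp (leq_trans sp mn) rel').
by rewrite ler_piMl ?exprn_ge0.
Qed.


Definition reliable_block w b := all_reliable w (b * L) L.

Definition count_reliable_blocks w b r :=
  count (fun b' => `[< reliable_block w b' >]) (iota b r).

Lemma count_reliable_blocks_unbounded w :
  (forall N, exists2 b, (N <= b)%N & reliable_block w b) ->
  forall n, exists r, (n <= count_reliable_blocks w 0 r)%N.
Proof.
move=> inf; elim=> [|n [r nr]]; first by exists 0%N.
have [b rb wb] := inf r; exists b.+1.
have -> : b.+1 = (r + (b - r).+1)%N by rewrite addnS subnKC.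
rewrite /count_reliable_blocks iotaD count_cat add0n -addn1 leq_add //.
rewrite -has_count; apply/hasP; exists b; last exact/asboolP.
by rewrite mem_iota rb /= addnS subnKC.
Qed.

Definition block_floor : R := (m%:R^-1) ^+ L.

Section Contraction.
Variable j0 : 'I_m.

Let m_gt0 : (0 < m)%N := leq_ltn_trans (leq0n j0) (ltn_ord j0).

Lemma block_floor_gt0 : 0 < block_floor.
Proof. by rewrite /block_floor exprn_gt0 // invr_gt0 ltr0n m_gt0. Qed.

Lemma block_floor_le1 : block_floor <= 1.
Proof. by rewrite /block_floor exprn_ile1 ?invr_ge0 // invf_le1 ?ler1n ?ltr0n ?m_gt0. Qed.

Lemma delta_Mprod_blocks r b k w : (r * L <= k)%N ->
  delta (Mprod (b * L) k w) <= (1 - block_floor) ^+ count_reliable_blocks w b r.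
Proof.
elim: r b k => [|r IH] b k rk.
  by rewrite expr0; apply: stochastic_delta_le1; apply: stochastic_Mprod.
have Lk : (L <= k)%N by rewrite (leq_trans _ rk) // mulSn leq_addr.
have rk' : (r * L <= k - L)%N by rewrite leq_subRL // -mulSn.
have IHk := IH b.+1 (k - L)%N rk'.
rewrite -(subnKC Lk) Mprod_add -mulSnr.
have -> : count_reliable_blocks w b r.+1 =
  (`[< reliable_block w b >] + count_reliable_blocks w b.+1 r)%N by [].
have sB := stochastic_Mprod (b * L) L w.
case: (pselect (reliable_block w b)) => [rb|nrb]; last first.
  by rewrite asboolF // add0n (le_trans (delta_mmul_le _ sB)).
rewrite asboolT // add1n exprS.
apply: le_trans (delta_mmul_contract _ sB (ltW block_floor_gt0) _) _.
  exact: (Mprod_col_ge j0 (leqnn _) rb).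
by rewrite ler_wpM2l // subr_ge0 block_floor_le1.
Qed.

Lemma delta_Tprod_cvg0 w : (forall N, exists2 b, (N <= b)%N & reliable_block w b) ->
  (fun k => delta (@Tprod R d T m E Rel k w)) @ \oo --> 0.
Proof.
move=> inf; apply/cvgr0Pnorm_lt => e e_gt0.
have q_ge0 : 0 <= 1 - block_floor by rewrite subr_ge0 block_floor_le1.
have q_lt1 : `|1 - block_floor| < 1 by rewrite ger0_norm // ltrBlDr ltrDl block_floor_gt0.
have /cvgr0Pnorm_lt/(_ e e_gt0)[n _ small] := cvg_expr q_lt1.
have [r nr] := count_reliable_blocks_unbounded inf n.
exists (r * L)%N => // k rk /=.
rewrite Tprod_Mprod ger0_norm ?delta_ge0 //.
have := @delta_Mprod_blocks r 0 k w rk; rewrite mul0n => /le_lt_trans; apply.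
apply: (@le_lt_trans _ _ ((1 - block_floor) ^+ n)); first by rewrite ler_wiXn2l // lerBlDr lerDl ltW ?block_floor_gt0.
by have := small _ (leqnn n); rewrite /= ger0_norm ?exprn_ge0.
Qed.

End Contraction.
End Connected.

Section Probability.
Variables (P : probability T R) (q : link -> R).
Hypothesis q_range : forall e, 0 < q e <= 1.
Hypothesis measurable_Rel : forall t e, measurable (Rel t e).
Hypothesis P_Rel : forall t e, P (Rel t e) = (q e)%:E.
Hypothesis independent_Rel :
  mutually_independent P (fun te : nat * link => Rel te.1 te.2).

Definition pr (A : set T) : R := fine (P A).

Lemma prE A : measurable A -> P A = (pr A)%:E.
Proof. by move=> mA; rewrite fineK ?fin_num_measure. Qed.

Lemma prD A B : measurable A -> measurable B -> pr (A `\` B) = pr A - pr (A `&` B).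
Proof.
move=> mA mB; rewrite /pr measureD ?ltey_eq ?fin_num_measure //.
by rewrite fineB ?fin_num_measure //; apply: measurableI.
Qed.

Definition links_event (s : seq (nat * link)) : set T :=
  \big[setI/setT]_(x <- s) Rel x.1 x.2.

Lemma measurable_links_event s : measurable (links_event s).
Proof. by apply: bigsetI_measurable => x _. Qed.

Lemma pr_links_event s : uniq s -> pr (links_event s) = \prod_(x <- s) q x.2.
Proof.
move=> us; rewrite /pr /links_event -bigcap_seq independent_Rel //.
by rewrite (eq_bigr (fun x => (q x.2)%:E)) ?prodEFin // => x _.
Qed.

Lemma links_event_cat s s' :
  links_event (s ++ s') = links_event s `&` links_event s'.
Proof. exact: big_cat. Qed.

Lemma pr_links_event_cat s s' : uniq (s ++ s') ->
  pr (links_event (s ++ s')) = pr (links_event s) * pr (links_event s').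
Proof.
move=> uss'; have := uss'; rewrite cat_uniq => /and3P[us _ us'].
by rewrite !pr_links_event // big_cat.
Qed.

Definition block_links b : seq (nat * link) :=
  [seq (t, e) | t <- iota (b * L) L, e <- enum {: link}].

Definition block_event b := links_event (block_links b).

Definition no_block_event (S : seq nat) : set T :=
  \big[setI/setT]_(b <- S) ~` block_event b.

Lemma measurable_no_block_event S : measurable (no_block_event S).
Proof. by apply: bigsetI_measurable => b _; apply/measurableC/measurable_links_event. Qed.

Lemma block_links_uniq b : uniq (block_links b).
Proof.
by apply: allpairs_uniq; rewrite ?iota_uniq ?enum_uniq // => -[] ? ? [] ? ? _ _.
Qed.

Lemma mem_block_links b x : (x \in block_links b) = (b * L <= x.1 < b * L + L)%N.
Proof.
apply/allpairsP/idP => [[[t e] [tb _ ->]]|xb]; first by rewrite -mem_iota.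
by exists x; rewrite mem_iota xb mem_enum -surjective_pairing.
Qed.

Lemma block_links_disjoint b b' x : b != b' ->
  x \in block_links b -> x \notin block_links b'.
Proof.
rewrite !mem_block_links => neq /andP[lo hi]; apply/negP => /andP[lo' hi'].
have ordered u v : (u < v)%N -> (u * L + L <= v * L)%N by rewrite -mulSnr leq_mul2r => ->.
case: (ltngtP b b') neq => // [bb'|b'b] _.
  by have := leq_trans hi (leq_trans (ordered _ _ bb') lo'); rewrite ltnn.
by have := leq_trans hi' (leq_trans (ordered _ _ b'b) lo); rewrite ltnn.
Qed.

Lemma block_event_reliable b w : block_event b w -> reliable_block w b.
Proof.
rewrite /block_event /links_event -bigcap_seq => bw t tb e.
by apply: (bw (t, e)); rewrite /= mem_block_links.
Qed.

Definition pblock : R := (\prod_(e : link) q e) ^+ L.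

Lemma pblock_gt0 : 0 < pblock.
Proof. by rewrite exprn_gt0 // prodr_gt0 // => e _; case/andP: (q_range e). Qed.

Lemma pblock_le1 : pblock <= 1.
Proof.
have q01 e : 0 <= q e <= 1 by case/andP: (q_range e) => /ltW ->.
by rewrite exprn_ile1 ?prodr_ge0 ?prodr_ile1 // => e _; case/andP: (q01 e) => -> ?.
Qed.

Lemma pr_block_event b : pr (block_event b) = pblock.
Proof.
rewrite pr_links_event ?block_links_uniq // /block_links /pblock.
rewrite -[in RHS](size_iota (b * L) L).
elim: (iota _ _) => [|t ts IH]; first by rewrite big_nil.
by rewrite /= big_cat big_map IH big_enum exprS.
Qed.

(* The events [Rel t e] for links [(t, e)] in [C] are kept as a conditioning
   factor so that the induction on [S] goes through. *)
Lemma pr_links_no_block C S : uniq C -> uniq S ->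
  (forall b x, b \in S -> x \in C -> x \notin block_links b) ->
  pr (links_event C `&` no_block_event S) = pr (links_event C) * (1 - pblock) ^+ size S.
Proof.
elim: S C => [|b S IH] C uC /=; first by rewrite /no_block_event big_nil setIT mulr1.
move=> /andP[bS uS] disj.
have disjS b' x : b' \in S -> x \in C -> x \notin block_links b'.
  by move=> b'S; apply: disj; rewrite inE b'S orbT.
have uCb : uniq (C ++ block_links b).
  rewrite cat_uniq uC block_links_uniq andbT; apply/hasPn => x xb.
  by apply/negP => xC; move: (disj b x (mem_head _ _) xC); rewrite xb.
have disjCb b' x : b' \in S -> x \in C ++ block_links b -> x \notin block_links b'.
  move=> b'S; rewrite mem_cat => /orP[|]; first exact: disjS.
  by apply: block_links_disjoint; apply: contraNneq bS => ->.
have -> : links_event C `&` no_block_event (b :: S) =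
    (links_event C `&` no_block_event S) `\` block_event b.
  by rewrite /no_block_event big_cons setDE setIAC setIA.
rewrite prD; last 2 first.
- exact: measurableI (measurable_links_event C) (measurable_no_block_event S).
- exact: measurable_links_event.
have -> : links_event C `&` no_block_event S `&` block_event b =
    links_event (C ++ block_links b) `&` no_block_event S.
  by rewrite links_event_cat setIAC.
rewrite !IH // pr_links_event_cat // pr_block_event.
by rewrite exprS; ring.
Qed.

Lemma pr_no_block_event S : uniq S -> pr (no_block_event S) = (1 - pblock) ^+ size S.
Proof.
move=> uS; have := @pr_links_no_block [::] S isT uS.
rewrite /links_event big_nil setTI /pr probability_setT mul1r.
by apply=> b x _; rewrite in_nil.
Qed.

Lemma geometric_bound_le0 (x r : R) : 0 <= r < 1 ->
  (forall n, x <= r ^+ n) -> x <= 0.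
Proof.
move=> /andP[r0 r1] bound; rewrite leNgt; apply/negP => x0.
have r_lt1 : `|r| < 1 by rewrite ger0_norm.
have /cvgr0Pnorm_lt/(_ _ x0)[n _ small] := cvg_expr r_lt1.
by have := small _ (leqnn n); rewrite /= ger0_norm ?exprn_ge0 // ltNge bound.
Qed.

Lemma no_reliable_block_after_null N :
  P (\bigcap_(b in [set b | (N <= b)%N]) ~` block_event b) = 0%E.
Proof.
set X := \bigcap_(b in _) _.
have mX : measurable X.
  by apply: bigcap_measurableType => b _; apply: measurableC; exact: measurable_links_event.
rewrite prE //; congr (_%:E); apply/eqP; rewrite eq_le fine_ge0 ?measure_ge0 // andbT.
apply: (@geometric_bound_le0 _ (1 - pblock)) => [|K].
  by rewrite subr_ge0 pblock_le1 ltrBlDr ltrDl pblock_gt0.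
rewrite -(size_iota N K) -(pr_no_block_event (iota_uniq N K)) -lee_fin -!prE //;
  last exact: measurable_no_block_event.
apply: le_measure; rewrite ?inE //; first exact: measurable_no_block_event.
rewrite /no_block_event -bigcap_seq; apply: sub_bigcap => b.
by rewrite /= mem_iota => /andP[Nb _] w; apply.
Qed.

Lemma finitely_many_reliable_blocks_negligible :
  P.-negligible (\bigcup_N \bigcap_(b in [set b | (N <= b)%N]) ~` block_event b).
Proof.
apply: negligible_bigcup => N; apply/negligibleP; last exact: no_reliable_block_after_null.
by apply: bigcap_measurableType => b _; apply: measurableC; exact: measurable_links_event.
Qed.

End Probability.
End Consensus.

Theorem lemma3 (R : realType) (d : measure_display) (T : measurableType d)
  (P : probability T R) (m : nat) (E : rel 'I_m)
  (q : edge m E -> R) (Rel : nat -> edge m E -> set T) :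
  strongly_connected E ->
  self_loops E ->
  (forall e, 0 < q e <= 1) ->
  (forall t e, measurable (Rel t e)) ->
  (forall t e, P (Rel t e) = (q e)%:E) ->
  mutually_independent P (fun te : nat * edge m E => Rel te.1 te.2) ->
  {ae P, forall w, (fun k => delta (@Tprod R d T m E Rel k w)) @ \oo --> (0 : R)}.
Proof.
move=> connected loops q_range measurable_Rel P_Rel independent_Rel.
have [m0|m_gt0] := posnP m.
  apply: aeW => w; apply: cvg_near_cst; apply: nearW => k.
  apply/eqP; rewrite eq_le delta_ge0 andbT; apply: delta_le => // -[i|e].
    by have := ltn_ord i; rewrite [X in (_ < X)%N]m0.
  by have := ltn_ord (val e).1; rewrite [X in (_ < X)%N]m0.
apply: negligibleS (finitely_many_reliable_blocks_negligible q_range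
  measurable_Rel P_Rel independent_Rel) => w /= not_cvg.
apply: contrapT => infinitely_often; apply: not_cvg.
apply: (delta_Tprod_cvg0 loops connected (Ordinal m_gt0)) => N.
apply: contrapT => none_after; apply: infinitely_often; exists N => // b Nb.
by move=> /block_event_reliable rb; apply: none_after; exists b.
Qed.
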